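(* Let $\mathcal Z,\mathcal S$ be finite, $f:\mathcal Z\times\mathcal S\to\mathbb R$, and $(Z_i,S_i)$, $i=1,\dots,n$, random variables with a common joint law $P_{ZS}$ (not depending on $i$) such that $\Pr[\mathbf S=\mathbf s\mid\mathbf Z=\mathbf z]=\prod_{i=1}^n\Pr[S_i=s_i\mid Z_i=z_i]$. Let $P_{S|Z}$ be the conditional of $P_{ZS}$. Then for every type $p$ with $\Pr[\hat p_{\mathbf Z}=p]>0$, $$\mathbb E\Big[\Big(\sum_{i=1}^n f(Z_i,S_i)\Big)^2\Big|\ \hat p_{\mathbf Z}=p\Big]=n^2\,\mathbb E_{P_{S|Z}\times p}[f(\tilde Z,S)]^2+n\,\mathbb E_{P_{S|Z}\times p}[f(\tilde Z,S)^2]-n\,\mathbb E_{p}\Big[\mathbb E_{P_{S|Z}}[f(\tilde Z,S)\mid\tilde Z]^2\Big],$$ where $(\tilde Z,S)$ has joint pmf $p(z)P_{S|Z}(s|z)$.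
   Context: $\mathbf Z=(Z_1,\dots,Z_n)$, $\mathbf S=(S_1,\dots,S_n)$; $\hat p_{\mathbf Z}$ is the empirical distribution (type) of $\mathbf Z$. *)

From mathcomp Require Import all_boot all_order all_algebra.
Set Implicit Arguments. Unset Strict Implicit. Unset Printing Implicit Defensive.
Import Order.TTheory GRing.Theory Num.Theory.
Local Open Scope ring_scope.

Section Prob.
Variables (R : realFieldType) (Omega : finType) (P : Omega -> R).

Definition is_pmf : Prop := (forall w, 0 <= P w) /\ \sum_w P w = 1.

Definition Pr (A : Omega -> bool) : R := \sum_(w | A w) P w.

Definition cE (X : Omega -> R) (A : Omega -> bool) : R :=
  (\sum_(w | A w) P w * X w) / Pr A.
End Prob.

Section Types.
Variables (R : realFieldType) (Omega Z : finType) (n : nat).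

Definition emp (Zv : 'I_n -> Omega -> Z) (w : Omega) : {ffun Z -> R} :=
  [ffun z => (#|[set i | Zv i w == z]|)%:R / n%:R].
End Types.

Section Cond.
Variables (R : realFieldType) (Z S : finType).

Definition condSZ (PZS : Z -> S -> R) (z : Z) (s : S) : R :=
  PZS z s / \sum_(s' : S) PZS z s'.

Definition Ejoint (PSZ : Z -> S -> R) (p : Z -> R) (g : Z -> S -> R) : R :=
  \sum_(z : Z) \sum_(s : S) p z * PSZ z s * g z s.

Definition Econd (PSZ : Z -> S -> R) (g : Z -> S -> R) (z : Z) : R :=
  \sum_(s : S) PSZ z s * g z s.

Definition Ep (p : Z -> R) (h : Z -> R) : R := \sum_(z : Z) p z * h z.
End Cond.

(* Given the whole vector Z = z, conditional independence makes S_1, ..., S_n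
   independent with S_i ~ P_{S|Z}(. | z_i), so the conditional second moment of
   the sum is the squared sum of the conditional means plus the sum of the
   conditional variances.  Both are sums over i of a function of z_i, which equal
   n times the p-average of that function whenever z has type p.  Hence the
   conditional second moment is the same for every z of type p, and averaging
   over these z gives the formula. *)

From mathcomp Require Import all_boot all_order all_algebra.
From mathcomp Require Import ring.

Set Implicit Arguments.
Unset Strict Implicit.
Unset Printing Implicit Defensive.
Import Order.TTheory GRing.Theory Num.Theory.
Local Open Scope ring_scope.

Lemma prod_if_pair (R : comPzRingType) (I : finType) (i j : I) (x y : I -> R) :
  i != j ->
  \prod_k (if k == i then x k else if k == j then y k else 1) = x i * y j.
Proof.
move=> ij; rewrite (bigD1 i) //= eqxx (bigD1 j) 1?eq_sym //= (negbTE ij) eqxx.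
rewrite big1 ?mulr1 // => k /andP[ki kj].
by rewrite (negbTE ki) (negbTE kj).
Qed.

Section ProductWeights.
Variables (R : comPzRingType) (S : finType) (n : nat) (q : 'I_n -> S -> R).

Lemma sum_prod_weight_prod (h : 'I_n -> S -> R) :
  \sum_(s : {ffun 'I_n -> S}) (\prod_k q k (s k)) * \prod_k h k (s k)
  = \prod_k \sum_t q k t * h k t.
Proof. by rewrite bigA_distr_bigA; apply: eq_bigr => s _; rewrite -big_split. Qed.

Hypothesis q_sum1 : forall k, \sum_t q k t = 1.

Lemma sum_prod_weight_coord (i : 'I_n) (g : S -> R) :
  \sum_(s : {ffun 'I_n -> S}) (\prod_k q k (s k)) * g (s i) = \sum_t q i t * g t.
Proof.
pose h k t := if k == i then g t else 1.
transitivity (\sum_(s : {ffun 'I_n -> S}) (\prod_k q k (s k)) * \prod_k h k (s k)).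
  by apply: eq_bigr => s _; rewrite -big_mkcond big_pred1_eq.
rewrite sum_prod_weight_prod
  (eq_bigr (fun k => if k == i then \sum_t q i t * g t else 1)).
  by rewrite -big_mkcond big_pred1_eq.
move=> k _; rewrite /h; case: eqP => [-> //|_].
by under eq_bigr do rewrite mulr1.
Qed.

Lemma sum_prod_weight_coord2 (i j : 'I_n) (g g' : S -> R) : i != j ->
  \sum_(s : {ffun 'I_n -> S}) (\prod_k q k (s k)) * (g (s i) * g' (s j))
  = (\sum_t q i t * g t) * (\sum_t q j t * g' t).
Proof.
move=> ij; pose h k t := if k == i then g t else if k == j then g' t else 1.
transitivity (\sum_(s : {ffun 'I_n -> S}) (\prod_k q k (s k)) * \prod_k h k (s k)).
  by apply: eq_bigr => s _; rewrite prod_if_pair.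
rewrite sum_prod_weight_prod -(prod_if_pair (fun k => \sum_t q k t * g t)
  (fun k => \sum_t q k t * g' t) ij).
apply: eq_bigr => k _; rewrite /h; case: ifP => _ //; case: ifP => _ //.
by under eq_bigr do rewrite mulr1.
Qed.

Lemma sum_prod_weight_sqr (a : 'I_n -> S -> R) :
  \sum_(s : {ffun 'I_n -> S}) (\prod_k q k (s k)) * (\sum_i a i (s i)) ^+ 2
  = (\sum_i \sum_t q i t * a i t) ^+ 2
    + \sum_i (\sum_t q i t * a i t ^+ 2 - (\sum_t q i t * a i t) ^+ 2).
Proof.
set m := fun i => \sum_t q i t * a i t.
have mixed i j :
    \sum_(s : {ffun 'I_n -> S}) (\prod_k q k (s k)) * (a i (s i) * a j (s j))
    = if i == j then \sum_t q i t * a i t ^+ 2 else m i * m j.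
  case: eqVneq => [<-|ij]; last exact: sum_prod_weight_coord2.
  by rewrite (sum_prod_weight_coord i (fun t => a i t * a i t)).
rewrite (eq_bigr (fun s : {ffun 'I_n -> S} =>
  \sum_i \sum_j (\prod_k q k (s k)) * (a i (s i) * a j (s j)))); last first.
  move=> s _; rewrite expr2 mulr_suml mulr_sumr; apply: eq_bigr => i _.
  by rewrite mulr_sumr mulr_sumr.
rewrite exchange_big /= expr2 mulr_suml -big_split /=; apply: eq_bigr => i _.
rewrite exchange_big /= (eq_bigr _ (fun j _ => mixed i j)) mulr_sumr.
rewrite (bigD1 i) //= eqxx [in RHS](bigD1 i) //= addrAC; congr (_ + _).
  by rewrite expr2 addrC subrK.
by apply: eq_bigr => j /negbTE; rewrite eq_sym => ->.
Qed.

End ProductWeights.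

Section Empirical.
Variables (R : numFieldType) (Z : finType) (n : nat).

Definition empirical (z : 'I_n -> Z) : {ffun Z -> R} :=
  [ffun y => #|[set i | z i == y]|%:R / n%:R].

Lemma mulrn_empirical (z : 'I_n -> Z) (y : Z) :
  n%:R * empirical z y = #|[set i | z i == y]|%:R.
Proof.
rewrite ffunE; have [n0|n_neq0] := eqVneq n 0%N.
  have := max_card [set i | z i == y].
  rewrite card_ord => /leq_trans/(_ (eq_leq n0)); rewrite leqn0 => /eqP ->.
  by rewrite n0 mul0r.
by rewrite mulrC divfK // pnatr_eq0.
Qed.

Lemma sum_empirical (z : 'I_n -> Z) (g : Z -> R) :
  \sum_i g (z i) = n%:R * \sum_y empirical z y * g y.
Proof.
rewrite (partition_big z xpredT) //= mulr_sumr; apply: eq_bigr => y _.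
rewrite mulrA mulrn_empirical (eq_bigr (fun _ => g y)) => [|i /eqP -> //].
rewrite sumr_const mulr_natl; congr (_ *+ _).
by apply: eq_card => i; rewrite !inE.
Qed.

End Empirical.

Lemma condSZ_sum1 (R : realFieldType) (Z S : finType) (PZS : Z -> S -> R) (y : Z) :
  \sum_t PZS y t != 0 -> \sum_t condSZ PZS y t = 1.
Proof. by move=> marg_neq0; rewrite /condSZ -mulr_suml divff. Qed.

Lemma Ejoint_Ep_Econd (R : realFieldType) (Z S : finType) (PSZ : Z -> S -> R)
    (p : Z -> R) (g : Z -> S -> R) :
  Ejoint PSZ p g = Ep p (Econd PSZ g).
Proof.
by apply: eq_bigr => z _; rewrite mulr_sumr; apply: eq_bigr => s _; rewrite mulrA.
Qed.

Lemma sum_partition_vec (R : nmodType) (Omega T : finType) (n : nat)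
    (X : 'I_n -> Omega -> T) (Q : pred Omega) (G : Omega -> R) :
  \sum_(w | Q w) G w =
  \sum_(x : {ffun 'I_n -> T}) \sum_(w | Q w && [forall i, X i w == x i]) G w.
Proof.
rewrite (partition_big (fun w => [ffun i => X i w]) xpredT) //=.
apply: eq_bigr => x _; apply: eq_bigl => w; congr (_ && _).
apply/eqP/forallP => [<- i|Xx]; first by rewrite ffunE.
by apply/ffunP => i; rewrite ffunE (eqP (Xx i)).
Qed.

Lemma sum_partition_emp (R : realFieldType) (Omega Z : finType) (n : nat)
    (Zv : 'I_n -> Omega -> Z) (p : {ffun Z -> R}) (G : Omega -> R) :
  \sum_(w | emp R Zv w == p) G w =
  \sum_(z : {ffun 'I_n -> Z} | empirical R z == p)
     \sum_(w | [forall i, Zv i w == z i]) G w.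
Proof.
rewrite (sum_partition_vec Zv) [in RHS]big_mkcond /=; apply: eq_bigr => z _.
have emp_z w : [forall i, Zv i w == z i] -> emp R Zv w = empirical R z.
  move=> /forallP Zz; apply/ffunP => y; rewrite !ffunE.
  by congr (_%:R / _); apply: eq_card => i; rewrite !inE (eqP (Zz i)).
case: eqP => [<-|znp].
  apply: eq_bigl => w.
  by case: (boolP [forall i, _]) => [/emp_z ->|]; rewrite ?andbF ?eqxx.
apply: big_pred0 => w.
by case: (boolP [forall i, _]) => [/emp_z ->|]; rewrite ?andbF ?andbT //; apply/eqP.
Qed.

Section ConditionalSecondMoment.
Variables (R : realFieldType) (Omega Z S : finType) (n : nat).
Variables (P : Omega -> R) (Zv : 'I_n -> Omega -> Z) (Sv : 'I_n -> Omega -> S).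
Variables (PZS : Z -> S -> R) (f : Z -> S -> R).

Definition cond_sqr_moment (z : 'I_n -> Z) : R :=
  (\sum_i Econd (condSZ PZS) f (z i)) ^+ 2
  + \sum_i (Econd (condSZ PZS) (fun y s => f y s ^+ 2) (z i)
            - Econd (condSZ PZS) f (z i) ^+ 2).

Lemma cond_sqr_moment_empirical (z : 'I_n -> Z) (p : {ffun Z -> R}) :
  empirical R z = p ->
  cond_sqr_moment z
  = n%:R ^+ 2 * Ejoint (condSZ PZS) p f ^+ 2
    + n%:R * Ejoint (condSZ PZS) p (fun y s => f y s ^+ 2)
    - n%:R * Ep p (fun y => Econd (condSZ PZS) f y ^+ 2).
Proof.
move=> zp; rewrite /cond_sqr_moment sumrB.
rewrite (sum_empirical z (fun y => Econd (condSZ PZS) f y ^+ 2)) !sum_empirical zp.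
by rewrite !Ejoint_Ep_Econd /Ep; ring.
Qed.

Hypothesis P_ge0 : forall w, 0 <= P w.

Lemma le_Pr (A B : Omega -> bool) : (forall w, A w -> B w) -> Pr P A <= Pr P B.
Proof.
move=> AB; have BA : [pred w | B w && A w] =1 A.
  by move=> w /=; case: (boolP (A w)) => [/AB ->|]; rewrite ?andbF.
by rewrite /Pr [leRHS](bigID A) /= (eq_bigl _ _ BA) lerDl sumr_ge0.
Qed.

Hypothesis law_ZS : forall (i : 'I_n) (z : Z) (s : S),
  Pr P (fun w => (Zv i w == z) && (Sv i w == s)) = PZS z s.

Lemma Pr_Zi (i : 'I_n) (y : Z) : Pr P (fun w => Zv i w == y) = \sum_t PZS y t.
Proof.
rewrite /Pr (partition_big (Sv i) xpredT) //=.
by apply: eq_bigr => t _; rewrite -(law_ZS i y t).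
Qed.

Hypothesis cond_indep : forall (z : {ffun 'I_n -> Z}) (s : {ffun 'I_n -> S}),
  0 < Pr P (fun w => [forall i, Zv i w == z i]) ->
  Pr P (fun w => [forall i, Zv i w == z i] && [forall i, Sv i w == s i])
    / Pr P (fun w => [forall i, Zv i w == z i])
  = \prod_(i < n) (Pr P (fun w => (Zv i w == z i) && (Sv i w == s i))
                    / Pr P (fun w => Zv i w == z i)).

Lemma Pr_Zvec_Svec (z : {ffun 'I_n -> Z}) (s : {ffun 'I_n -> S}) :
  Pr P (fun w => [forall i, Zv i w == z i] && [forall i, Sv i w == s i])
  = Pr P (fun w => [forall i, Zv i w == z i]) * \prod_i condSZ PZS (z i) (s i).
Proof.
have [PZ0|PZ_gt0] := eqVneq (Pr P (fun w => [forall i, Zv i w == z i])) 0.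
  rewrite PZ0 mul0r; apply/eqP; rewrite eq_le -{1}PZ0 le_Pr ?sumr_ge0 //.
  by move=> w /andP[].
have -> : \prod_i condSZ PZS (z i) (s i)
    = \prod_i (Pr P (fun w => (Zv i w == z i) && (Sv i w == s i))
               / Pr P (fun w => Zv i w == z i)).
  by apply: eq_bigr => i _; rewrite law_ZS Pr_Zi.
by rewrite -cond_indep ?lt_def ?PZ_gt0 ?sumr_ge0 // mulrC divfK.
Qed.

Lemma sum_sqr_given_Zvec (z : {ffun 'I_n -> Z}) :
  \sum_(w | [forall i, Zv i w == z i]) P w * (\sum_i f (Zv i w) (Sv i w)) ^+ 2
  = Pr P (fun w => [forall i, Zv i w == z i]) * cond_sqr_moment z.
Proof.
have [PZ0|PZ_neq0] := eqVneq (Pr P (fun w => [forall i, Zv i w == z i])) 0.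
  rewrite PZ0 mul0r; apply: big1 => w Zz.
  by move/psumr_eq0P: PZ0 => -> //; rewrite mul0r.
have marg_neq0 i : \sum_t PZS (z i) t != 0.
  have PZ_le : Pr P (fun w => [forall i, Zv i w == z i])
               <= Pr P (fun w => Zv i w == z i).
    by apply: le_Pr => w /forallP.
  by rewrite -(Pr_Zi i) gt_eqF // (lt_le_trans _ PZ_le) // lt_def PZ_neq0 sumr_ge0.
rewrite (sum_partition_vec Sv).
transitivity (\sum_(s : {ffun 'I_n -> S})
  Pr P (fun w => [forall i, Zv i w == z i] && [forall i, Sv i w == s i])
  * (\sum_i f (z i) (s i)) ^+ 2).
  apply: eq_bigr => s _; rewrite /Pr mulr_suml.
  apply: eq_bigr => w /andP[/forallP Zz /forallP Ss].
  by congr (_ * _ ^+ 2); apply: eq_bigr => i _; rewrite (eqP (Zz i)) (eqP (Ss i)).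
under eq_bigr do rewrite Pr_Zvec_Svec -mulrA.
have q_sum1 i : \sum_t condSZ PZS (z i) t = 1 by apply: condSZ_sum1.
by rewrite -mulr_sumr (sum_prod_weight_sqr q_sum1 (fun i => f (z i))).
Qed.

End ConditionalSecondMoment.

Theorem lemma14 (R : realFieldType) (Z S Omega : finType) (n : nat)
  (f : Z -> S -> R) (P : Omega -> R)
  (Zv : 'I_n -> Omega -> Z) (Sv : 'I_n -> Omega -> S) (PZS : Z -> S -> R) :
  is_pmf P ->
  (* common joint law P_{ZS} of (Z_i, S_i), not depending on i *)
  (forall (i : 'I_n) (z : Z) (s : S),
     Pr P (fun w => (Zv i w == z) && (Sv i w == s)) = PZS z s) ->
  (* Pr[S = s | Z = z] = prod_i Pr[S_i = s_i | Z_i = z_i] *)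
  (forall (z : {ffun 'I_n -> Z}) (s : {ffun 'I_n -> S}),
     0 < Pr P (fun w => [forall i, Zv i w == z i]) ->
     Pr P (fun w => [forall i, Zv i w == z i] && [forall i, Sv i w == s i])
       / Pr P (fun w => [forall i, Zv i w == z i])
     = \prod_(i < n) (Pr P (fun w => (Zv i w == z i) && (Sv i w == s i))
                       / Pr P (fun w => Zv i w == z i))) ->
  forall p : {ffun Z -> R},
    0 < Pr P (fun w => emp R Zv w == p) ->
    cE P (fun w => (\sum_(i < n) f (Zv i w) (Sv i w)) ^+ 2) (fun w => emp R Zv w == p)
    = (n%:R) ^+ 2 * (Ejoint (condSZ PZS) p f) ^+ 2
      + n%:R * Ejoint (condSZ PZS) p (fun z s => (f z s) ^+ 2)
      - n%:R * Ep p (fun z => (Econd (condSZ PZS) f z) ^+ 2).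
Proof.
move=> [P_ge0 _] law_ZS cond_indep p Pr_p_gt0.
rewrite /cE (sum_partition_emp Zv).
under eq_bigr => z /eqP zp.
  rewrite (sum_sqr_given_Zvec f P_ge0 law_ZS cond_indep).
  rewrite (cond_sqr_moment_empirical _ _ zp).
  over.
by rewrite -mulr_suml -(sum_partition_emp Zv) mulrAC divff ?mul1r // gt_eqF.
Qed.
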